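(* Assume the standing setup. If $\lambda_1(\boldsymbol\Omega_K)>1$, then $\mathbf 0_K\prec\mathbf g(1)\prec\mathbf 1_K$.
   Context: Standing setup: $K\ge1$, $\boldsymbol\rho=(\rho_k)$ with $\rho_k\in(0,1)$, $\sum\rho_k=1$; $\mathbf S_K=(s_{kl})$ symmetric with $s_{kl}>0$; $\mathbf D_{\mathbf v}$ diagonal with diagonal $\mathbf v$; $\boldsymbol\Omega_K=\mathbf D_{\boldsymbol\rho^{\odot1/2}}\mathbf S_K\mathbf D_{\boldsymbol\rho^{\odot1/2}}$, $\boldsymbol\Gamma_K=\mathbf S_K\mathbf D_{\boldsymbol\rho}$; $\lambda_1$ = largest eigenvalue. For each $N$, $[N]$ is split into consecutive blocks $B_k$ with $|B_k|/N\to\rho_k$; $\Sigma_{ij}=s_{kl}$ for $i\in B_k,j\in B_l$; $\mathbf H$ symmetric with independent standard Gaussian entries on/above the diagonal; $\mathbf X=\mathbf H\odot\boldsymbol\Sigma^{\odot1/2}-N^{-1/2}\mathrm{Diag}(\boldsymbol\Sigma\mathbf 1)$; $\mu_X$ the a.s. limiting spectral distribution of $\mathbf X/\sqrt N$. QVE: for $z\in\mathbb H_-=\{\Im z<0\}$, $\mathbf g(z)$ is the unique solution in $(\mathbb H_+)^K$ of $\mathbf 1_K=z\mathbf g-\mathbf g\odot\boldsymbol\Gamma_K(\mathbf g-\mathbf 1_K)$, $\sum_k\rho_kg_k$ being the Stieltjes transform of $\mu_X$; $\mathbf g$ extends continuously to $\mathbb H_-\cup\mathbb R$, analytically off $\mathrm{Supp}(\mu_X)$,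 and $\mathbf g(1)$ is the value of this extension at $1$. $\prec$ is entrywise strict inequality. *)

From HB Require Import structures.
From mathcomp Require Import all_boot all_order all_algebra.
From mathcomp Require Import all_classical all_reals all_analysis.
From mathcomp Require Import complex.
Set Implicit Arguments. Unset Strict Implicit. Unset Printing Implicit Defensive.
Import Order.TTheory GRing.Theory Num.Theory numFieldNormedType.Exports.
Local Open Scope ring_scope.
Local Open Scope classical_set_scope.

(* The complex numbers over a real field R, seen as a numFieldType so that
   it carries its standard (norm) topology from MathComp-Analysis. *)
Definition Cplx (R : realType) : numFieldType := R[i].

Definition OmegaK (R : realType) (K : nat) (rho : 'I_K -> R) (S : 'M[R]_K)
  : 'M[R]_K :=
  diag_mx (\row_k Num.sqrt (rho k)) *m S *m diag_mx (\row_k Num.sqrt (rho k)).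

Definition GammaK (R : realType) (K : nat) (rho : 'I_K -> R) (S : 'M[R]_K)
  : 'M[R]_K :=
  S *m diag_mx (\row_k rho k).

Definition lambda1 (R : realType) (K : nat) (A : 'M[R]_K) : R :=
  sup [set a : R | eigenvalue A a].

Definition Hminus (R : realType) : set (Cplx R) := [set z | complex.Im z < 0].
Definition Hplus (R : realType) : set (Cplx R) := [set z | 0 < complex.Im z].

(* g : C -> C^K is the solution of the QVE
     1_K = z g - g .* Gamma_K (g - 1_K)
   on H_-, with values in (H_+)^K, extended continuously to H_- u R
   (the closed lower half plane). *)
Definition QVE_solution_ext (R : realType) (K : nat) (rho : 'I_K -> R)
  (S : 'M[R]_K) (g : Cplx R -> 'I_K -> Cplx R) : Prop :=
  [/\ forall z, @Hminus R z -> forall k, @Hplus R (g z k),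
      forall z, @Hminus R z -> forall k,
        1 = z * g z k - g z k * \sum_(l < K) (real_complex R ((GammaK rho S) k l) : Cplx R) * (g z l - 1)
    & forall k, {within [set z : Cplx R | complex.Im z <= 0],
                  continuous (fun z => g z k)}].

(* Since lambda_1(Omega_K) > 1 and Omega_K is entrywise positive, an eigenvector for an
   eigenvalue a > 1 yields (Perron) a vector p > 0 with a p <= Gamma_K p.  Then 1 - eta p,
   for small eta > 0, is a supersolution of the real equation
   r_k (1 + sum_l Gamma_kl (1 - r_l)) = 1, i.e. of the QVE at z = 1 with real unknowns,
   and the infimum of all supersolutions in [0,1]^K is a solution r with 0 < r < 1.
   Comparing the QVE at z = 1 - it with this equation and looking at the index that
   maximises |g_l - r_l|^2 / ((1 - r_l) Im g_l) gives |g(1 - it) - r| = O(t); continuity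
   of g at 1 forces g(1) = r. *)

From HB Require Import structures.
From mathcomp Require Import all_boot all_order all_algebra.
From mathcomp Require Import all_classical all_reals all_analysis.
From mathcomp Require Import complex.
From mathcomp Require Import ring lra.
Import Order.TTheory GRing.Theory Num.Theory numFieldNormedType.Exports.
Set Implicit Arguments. Unset Strict Implicit. Unset Printing Implicit Defensive.
Local Open Scope ring_scope.
Local Open Scope classical_set_scope.

Section RealQVE.
Variables (R : realType) (K : nat) (G : 'M[R]_K).
Hypothesis G_ge0 : forall k l, 0 <= G k l.

Definition qve_real_map (q : 'I_K -> R) k := (1 + \sum_l G k l * (1 - q l))^-1.

Lemma qve_real_den_ge1 q k : (forall l, q l <= 1) -> 1 <= 1 + \sum_l G k l * (1 - q l).
Proof.
move=> q_le1; rewrite lerDl; apply: sumr_ge0 => l _.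
by rewrite mulr_ge0 // subr_ge0.
Qed.

Lemma qve_real_map_bounds q k : (forall l, q l <= 1) -> 0 < qve_real_map q k <= 1.
Proof.
move=> q_le1; have den_ge1 := qve_real_den_ge1 k q_le1.
by rewrite /qve_real_map invr_gt0 invf_le1; [apply/andP; split|]; lra.
Qed.

Lemma qve_real_map_le q q' k : (forall l, q l <= q' l) -> (forall l, q' l <= 1) ->
  qve_real_map q k <= qve_real_map q' k.
Proof.
move=> le_qq' q'_le1.
have q_le1 l : q l <= 1 by apply: le_trans (le_qq' l) (q'_le1 l).
have := qve_real_den_ge1 k q_le1; have := qve_real_den_ge1 k q'_le1.
move=> den'_ge1 den_ge1; rewrite lef_pV2 ?posrE; [|lra|lra].
rewrite lerD2l; apply: ler_sum => l _; apply: ler_wpM2l => //.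
by rewrite lerD2l lerN2.
Qed.

(* Knaster--Tarski: the infimum of all supersolutions in [0,1]^K is a fixed point. *)
Lemma qve_real_fixpoint_below (q0 : 'I_K -> R) :
  (forall k, 0 <= q0 k <= 1) -> (forall k, qve_real_map q0 k <= q0 k) ->
  exists r, (forall k, r k <= q0 k) /\ forall k, qve_real_map r k = r k.
Proof.
move=> q0_01 Fq0.
pose Q := [set q : 'I_K -> R | (forall k, 0 <= q k <= 1) /\
                               forall k, qve_real_map q k <= q k].
have Qq0 : Q q0 by [].
have Q_lb k : lbound ((fun q => q k) @` Q) 0.
  by move=> _ [q [q01 _] <-]; have /andP[] := q01 k.
pose r k := inf ((fun q => q k) @` Q).
have r_le q k : Q q -> r k <= q k.
  by move=> Qq; apply: ge_inf; [exists 0; exact: Q_lb | exists q].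
have r_ge0 k : 0 <= r k by apply: lb_le_inf; [exists (q0 k), q0 | exact: Q_lb].
have r_le1 k : r k <= 1 by apply: le_trans (r_le _ _ Qq0) _; case/andP: (q0_01 k).
have Fr_le k : qve_real_map r k <= r k.
  apply: lb_le_inf; first by exists (q0 k), q0.
  move=> _ [q [q01 Fq] <-]; apply: le_trans (Fq k).
  by apply: qve_real_map_le => l; [exact: r_le | case/andP: (q01 l)].
have QFr : Q (qve_real_map r).
  split=> k; first by case/andP: (qve_real_map_bounds k r_le1) => /ltW -> ->.
  by apply: qve_real_map_le => // l; apply: le_trans (Fr_le l) (r_le1 l).
exists r; split=> k; first exact: r_le.
by apply/eqP; rewrite eq_le Fr_le r_le.
Qed.

(* [q0 := 1 - eta p] works for small [eta > 0], as [(1 - eta p) (1 + eta a p) >= 1]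
   as soon as [eta a p <= a - 1]. *)
Lemma qve_real_supersolution (a : R) (p : 'I_K -> R) (k0 : 'I_K) :
  1 < a -> (forall k, 0 < p k) -> (forall k, a * p k <= \sum_l G k l * p l) ->
  exists q0 : 'I_K -> R, (forall k, 0 <= q0 k < 1) /\
                         forall k, qve_real_map q0 k <= q0 k.
Proof.
move=> a_gt1 p_gt0 ap_le.
pose M := \sum_k p k.
have p_leM k : p k <= M.
  by rewrite /M (bigD1 k) //= lerDl; apply: sumr_ge0 => l _; exact: ltW.
have M_gt0 : 0 < M by apply: lt_le_trans (p_gt0 k0) (p_leM k0).
pose eta := (a - 1) / (a * M).
have eta_gt0 : 0 < eta by rewrite divr_gt0 ?mulr_gt0 //; lra.
have etap_le k : eta * a * p k <= a - 1.
  have -> : eta * a * p k = (a - 1) * (p k / M).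
    by rewrite /eta; field; rewrite gt_eqF // gt_eqF //; lra.
  by rewrite ler_piMr ?ler_pdivrMr ?mul1r //; lra.
have etap_gt0 k : 0 < eta * p k by rewrite mulr_gt0.
have etap_lt1 k : eta * p k < 1.
  by have := etap_le k; have := etap_gt0 k; nra.
exists (fun k => 1 - eta * p k); split=> k.
  by apply/andP; split; have := etap_lt1 k; have := etap_gt0 k; lra.
have -> : qve_real_map (fun k => 1 - eta * p k) k = (1 + eta * \sum_l G k l * p l)^-1.
  rewrite /qve_real_map mulr_sumr; congr (1 + _)^-1.
  by apply: eq_bigr => l _; ring.
have Gp_ge0 : 0 <= \sum_l G k l * p l.
  by apply: sumr_ge0 => l _; rewrite mulr_ge0 // ltW.
rewrite -div1r ler_pdivrMr; last by have := mulr_ge0 (ltW eta_gt0) Gp_ge0; lra.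
have eta_ap_le : eta * a * p k <= eta * \sum_l G k l * p l.
  by rewrite -mulrA ler_pM2l.
have := etap_le k; have := etap_lt1 k; have := etap_gt0 k.
move: eta_ap_le; rewrite [eta * a]mulrC -mulrA.
move: (eta * p k) (eta * \sum_l G k l * p l) => x y *; nra.
Qed.

Lemma qve_real_solution (a : R) (p : 'I_K -> R) (k0 : 'I_K) :
  1 < a -> (forall k, 0 < p k) -> (forall k, a * p k <= \sum_l G k l * p l) ->
  exists r : 'I_K -> R, (forall k, 0 < r k < 1) /\
                        forall k, r k * (1 + \sum_l G k l * (1 - r l)) = 1.
Proof.
move=> a_gt1 p_gt0 ap_le.
have [q0 [q0_01 Fq0]] := qve_real_supersolution k0 a_gt1 p_gt0 ap_le.
have [|r [r_le Fr]] := qve_real_fixpoint_below (q0 := q0) _ Fq0.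
  by move=> k; case/andP: (q0_01 k) => -> /ltW.
have r_lt1 k : r k < 1 by apply: le_lt_trans (r_le k) _; case/andP: (q0_01 k).
exists r; split=> k.
  rewrite r_lt1 andbT -Fr.
  by case/andP: (qve_real_map_bounds k (fun l => ltW (r_lt1 l))).
have := qve_real_den_ge1 k (fun l => ltW (r_lt1 l)).
by rewrite -{1}Fr /qve_real_map => den_ge1; rewrite mulVf //; lra.
Qed.

End RealQVE.

Lemma lambda1_gt1_eigenvalue (R : realType) K (A : 'M[R]_K) :
  1 < lambda1 A -> exists2 a, 1 < a & eigenvalue A a.
Proof.
rewrite /lambda1; set E := [set a | eigenvalue A a] => lam_gt1.
have supE : has_sup E by apply: contrapT => /sup_out supE; move: lam_gt1; rewrite supE; lra.
have [a Ea lt_a] := sup_adherent (eps := sup E - 1) ltac:(lra) supE.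
by exists a => //; lra.
Qed.

Lemma eigenvalue_abs_subinvariant (R : realType) K (A : 'M[R]_K) (a : R) :
  (forall k l, 0 <= A k l) -> 0 <= a -> eigenvalue A a ->
  exists2 y : 'I_K -> R, (forall k, 0 <= y k) /\ (exists k, 0 < y k) &
    forall l, a * y l <= \sum_k y k * A k l.
Proof.
move=> A_ge0 a_ge0 /eigenvalueP [v vA v_neq0].
exists (fun k => `|v 0 k|); first split => [k|]; first exact: normr_ge0.
  apply: contrapT => /forallNP v0; move/eqP: v_neq0; apply; apply/rowP => k.
  by rewrite mxE; apply/normr0_eq0/le_anti; rewrite normr_ge0 andbT leNgt; exact/negP/v0.
move=> l; have := congr1 (fun M : 'M[R]_(1, K) => M 0 l) vA; rewrite /= !mxE => vAl.
rewrite -[a]ger0_norm // -normrM -vAl; apply: le_trans (ler_norm_sum _ _ _) _.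
by apply: ler_sum => k _; rewrite normrM (ger0_norm (A_ge0 k l)).
Qed.

Lemma positive_subinvariant_of_eigenvalue (R : realType) K (A : 'M[R]_K) (a : R) :
  (forall k l, 0 < A k l) -> 0 <= a -> eigenvalue A a ->
  exists2 q : 'I_K -> R, forall k, 0 < q k &
    forall l, a * q l <= \sum_k q k * A k l.
Proof.
move=> A_gt0 a_ge0 Ea.
have [y [y_ge0 [k1 yk1_gt0]] ay_le] :=
  eigenvalue_abs_subinvariant (fun k l => ltW (A_gt0 k l)) a_ge0 Ea.
exists (fun l => \sum_k y k * A k l) => [l|m].
  rewrite (bigD1 k1) //= ltr_pwDl ?mulr_gt0 //.
  by apply: sumr_ge0 => k _; rewrite mulr_ge0 // ltW.
rewrite mulr_sumr; apply: ler_sum => l _.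
by rewrite mulrA ler_wpM2r ?ay_le // ltW.
Qed.

Lemma OmegaK_entry (R : realType) K (rho : 'I_K -> R) (S : 'M[R]_K) k l :
  OmegaK rho S k l = Num.sqrt (rho k) * S k l * Num.sqrt (rho l).
Proof. by rewrite /OmegaK mul_mx_diag mul_diag_mx !mxE. Qed.

Lemma GammaK_entry (R : realType) K (rho : 'I_K -> R) (S : 'M[R]_K) k l :
  GammaK rho S k l = S k l * rho l.
Proof. by rewrite /GammaK mul_mx_diag !mxE. Qed.

(* Gamma_K = D_rho^{-1/2} Omega_K^T D_rho^{1/2}, so q Omega_K >= a q turns into
   Gamma_K p >= a p with p = D_rho^{-1/2} q. *)
Lemma GammaK_subinvariant (R : realType) K (rho : 'I_K -> R) (S : 'M[R]_K) :
  (forall k, 0 < rho k) -> S^T = S -> (forall k l, 0 < S k l) ->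
  1 < lambda1 (OmegaK rho S) ->
  exists2 a, 1 < a & exists2 p : 'I_K -> R, forall k, 0 < p k &
    forall k, a * p k <= \sum_l GammaK rho S k l * p l.
Proof.
move=> rho_gt0 S_sym S_gt0 /lambda1_gt1_eigenvalue [a a_gt1 Ea].
have sqrt_rho_gt0 k : 0 < Num.sqrt (rho k) by rewrite sqrtr_gt0.
have Omega_gt0 k l : 0 < OmegaK rho S k l by rewrite OmegaK_entry !mulr_gt0.
have [q q_gt0 aq_le] :=
  positive_subinvariant_of_eigenvalue Omega_gt0 (ltW (lt_trans ltr01 a_gt1)) Ea.
exists a => //; exists (fun l => q l / Num.sqrt (rho l)) => [k|k]; first exact: divr_gt0.
have -> : \sum_l GammaK rho S k l * (q l / Num.sqrt (rho l)) =
          (\sum_l q l * OmegaK rho S l k) / Num.sqrt (rho k).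
  rewrite mulr_suml; apply: eq_bigr => l _.
  rewrite GammaK_entry OmegaK_entry -{1}(sqr_sqrtr (ltW (rho_gt0 l))).
  have -> : S l k = S k l by rewrite -[in LHS]S_sym mxE.
  by field; rewrite !gt_eqF.
by rewrite mulrA ler_pM2r ?invr_gt0.
Qed.

Lemma AMGM2_weighted (R : realFieldType) (a b x y n : R) :
  0 <= a -> 0 <= b -> 0 <= x -> 0 <= y -> 0 <= n -> n ^+ 2 <= x * y ->
  2 * (a * b) * n <= a ^+ 2 * x + b ^+ 2 * y.
Proof.
move=> a0 b0 x0 y0 n0 nxy.
have u0 : 0 <= a ^+ 2 * x by rewrite mulr_ge0 ?sqr_ge0.
have v0 : 0 <= b ^+ 2 * y by rewrite mulr_ge0 ?sqr_ge0.
have uv : (a * b * n) ^+ 2 <= (a ^+ 2 * x) * (b ^+ 2 * y).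
  have -> : a ^+ 2 * x * (b ^+ 2 * y) = (a * b) ^+ 2 * (x * y) by ring.
  by rewrite [X in X <= _]exprMn ler_wpM2l ?sqr_ge0.
have abn0 : 0 <= a * b * n by rewrite !mulr_ge0.
rewrite -mulrA; move: (a * b * n) (a ^+ 2 * x) (b ^+ 2 * y) abn0 u0 v0 uv => m u v *.
have : 0 <= (u - v) ^+ 2 by exact: sqr_ge0.
nra.
Qed.

Section DistanceEstimate.
Variables (R : realType) (K : nat) (G : 'M[R]_K) (r : 'I_K -> R) (t : R).
Variables (b n d : 'I_K -> R).
Hypotheses (G_gt0 : forall k l, 0 < G k l) (r_01 : forall k, 0 < r k < 1).
Hypothesis r_fix : forall k, r k * (1 + \sum_l G k l * (1 - r l)) = 1.
Hypotheses (t_gt0 : 0 < t) (b_gt0 : forall k, 0 < b k) (n_gt0 : forall k, 0 < n k).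
Hypothesis d_ge0 : forall k, 0 <= d k.
Hypothesis b_eq : forall k, b k = n k ^+ 2 * (t + \sum_l G k l * b l).
Hypothesis d_le : forall k, d k <= n k * r k * (t + \sum_l G k l * d l).

Let ratio l := d l ^+ 2 / ((1 - r l) * b l).

Let one_sub_r_gt0 k : 0 < 1 - r k.
Proof. by case/andP: (r_01 k); lra. Qed.

Let ratio_le l c : ratio l <= c -> d l ^+ 2 <= c * ((1 - r l) * b l).
Proof. by rewrite ler_pdivrMr ?mulr_gt0. Qed.

Let nsqr_sum_le k : n k ^+ 2 * \sum_l G k l * b l <= b k.
Proof.
rewrite [leRHS]b_eq ler_wpM2l ?sqr_ge0 // lerDr; exact: ltW.
Qed.

Let ratio_ge0 k : 0 <= ratio k.
Proof. by rewrite divr_ge0 ?sqr_ge0 // ltW ?mulr_gt0. Qed.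

(* AM-GM against the weights [1 - r l] and [b l], with the ratio maximal at [k],
   turns [r_fix] and [b_eq] into a bound on the average of [d] around [k]. *)
Lemma sum_dist_le_at_argmax k : (forall l, ratio l <= ratio k) ->
  2 * d k * n k * r k * \sum_l G k l * d l <= d k ^+ 2 * (1 + r k).
Proof.
move=> ratio_max; have [rk_gt0 _] := andP (r_01 k); have pk_gt0 := one_sub_r_gt0 k.
pose T := ratio k; pose P := \sum_l G k l * (1 - r l); pose Y := \sum_l G k l * b l.
have T_eq : T * ((1 - r k) * b k) = d k ^+ 2.
  by rewrite /T /ratio mulfVK // gt_eqF ?mulr_gt0.
have P_eq : r k * P = 1 - r k by have := r_fix k; rewrite mulrDr mulr1 /P; lra.
have amgm_sum : 2 * (d k * (n k * (1 - r k))) * \sum_l G k l * d l <=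
                d k ^+ 2 * P + (n k * (1 - r k)) ^+ 2 * (T * Y).
  have -> : d k ^+ 2 * P + (n k * (1 - r k)) ^+ 2 * (T * Y) = \sum_l G k l *
      (d k ^+ 2 * (1 - r l) + (n k * (1 - r k)) ^+ 2 * (T * b l)).
    by rewrite /P /Y !mulr_sumr -big_split; apply: eq_bigr => l _ /=; ring.
  rewrite mulr_sumr; apply: ler_sum => l _; rewrite mulrCA.
  apply: ler_wpM2l; first exact: ltW.
  apply: AMGM2_weighted.
  - exact: d_ge0.
  - by rewrite ltW ?mulr_gt0.
  - exact: ltW (one_sub_r_gt0 l).
  - exact: mulr_ge0 (ratio_ge0 k) (ltW (b_gt0 l)).
  - exact: d_ge0.
  - by rewrite mulrCA; apply: ratio_le; exact: ratio_max.
rewrite -(ler_pM2l pk_gt0).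
have -> : (1 - r k) * (d k ^+ 2 * (1 + r k)) =
    d k ^+ 2 * (r k * P) + (1 - r k) * r k * (T * ((1 - r k) * b k)).
  by rewrite P_eq T_eq; ring.
have -> : (1 - r k) * (2 * d k * n k * r k * \sum_l G k l * d l) =
    r k * (2 * (d k * (n k * (1 - r k))) * \sum_l G k l * d l) by ring.
apply: le_trans (ler_wpM2l (ltW rk_gt0) amgm_sum) _.
rewrite mulrDr mulrCA lerD2l.
have -> : r k * ((n k * (1 - r k)) ^+ 2 * (T * Y)) =
    ((1 - r k) * r k * T * (1 - r k)) * (n k ^+ 2 * Y) by ring.
have -> : (1 - r k) * r k * (T * ((1 - r k) * b k)) =
    ((1 - r k) * r k * T * (1 - r k)) * b k by ring.
apply: ler_wpM2l; last exact: nsqr_sum_le.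
have pk_ge0 := ltW pk_gt0; have T_ge0 : 0 <= T := ratio_ge0 k.
by rewrite mulr_ge0 // mulr_ge0 // mulr_ge0 // ltW.
Qed.

Lemma dist_at_argmax k : (forall l, ratio l <= ratio k) ->
  d k * (1 - r k) <= 2 * n k * r k * t.
Proof.
move=> ratio_max; have [rk_gt0 _] := andP (r_01 k).
have [dk0|dk_neq0] := eqVneq (d k) 0.
  by rewrite dk0 mul0r !mulr_ge0 // ltW.
have dk_gt0 : 0 < d k by rewrite lt_neqAle eq_sym dk_neq0 d_ge0.
rewrite -(ler_pM2l dk_gt0).
have := sum_dist_le_at_argmax ratio_max; have := ler_wpM2l (ltW dk_gt0) (d_le k).
move: (\sum_l G k l * d l) => X; nra.
Qed.

(* The bound at [j] is read off a maximising index [k] of the ratio, since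
   [b_eq] gives [b k >= n k ^+ 2 * G k j * b j]. *)
Lemma dist_sqr_le j : d j ^+ 2 <=
  (\sum_k 4 * r k ^+ 2 * (1 - r j) / ((1 - r k) ^+ 3 * G k j)) * t ^+ 2.
Proof.
have [k _ k_max] := @arg_maxP _ _ _ j xpredT ratio isT.
have dk_le := dist_at_argmax (fun l => k_max l isT).
have [rk_gt0 _] := andP (r_01 k).
have pk_gt0 := one_sub_r_gt0 k; have pj_gt0 := one_sub_r_gt0 j.
have nG_gt0 : 0 < n k ^+ 2 * G k j by rewrite mulr_gt0 ?exprn_gt0.
have bk_ge : n k ^+ 2 * G k j * b j <= b k.
  apply: le_trans (nsqr_sum_le k); rewrite -mulrA ler_wpM2l ?sqr_ge0 //.
  by rewrite (bigD1 j) //= lerDl; apply: sumr_ge0 => l _; rewrite mulr_ge0 ?ltW.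
pose c := (1 - r j) / ((1 - r k) * (n k ^+ 2 * G k j)).
have ratio_k_le : ratio k * ((1 - r j) * b j) <= d k ^+ 2 * c.
  have -> : ratio k * ((1 - r j) * b j) =
      d k ^+ 2 * (1 - r j) / (1 - r k) * (b j / b k).
    by rewrite /ratio; field; rewrite !gt_eqF.
  have -> : d k ^+ 2 * c = d k ^+ 2 * (1 - r j) / (1 - r k) * (b j / (n k ^+ 2 * G k j * b j)).
    by rewrite /c; field; rewrite !gt_eqF ?mulr_gt0.
  apply: ler_wpM2l; first by rewrite divr_ge0 ?mulr_ge0 ?sqr_ge0 // ltW.
  by rewrite ler_pM2l // lef_pV2 ?posrE ?mulr_gt0.
have dk_sqr_le : d k ^+ 2 <= (2 * n k * r k * t / (1 - r k)) ^+ 2.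
  rewrite ler_pXn2r ?nnegrE ?ler_pdivlMr //.
  by rewrite mul0r !mulr_ge0 // ltW.
apply: le_trans (ratio_le (k_max j isT)) _; apply: le_trans ratio_k_le _.
apply: le_trans (_ : _ <= 4 * r k ^+ 2 * (1 - r j) / ((1 - r k) ^+ 3 * G k j) * t ^+ 2) _.
  have -> : 4 * r k ^+ 2 * (1 - r j) / ((1 - r k) ^+ 3 * G k j) * t ^+ 2 =
      (2 * n k * r k * t / (1 - r k)) ^+ 2 * c.
    by rewrite /c; field; rewrite !gt_eqF ?mulr_gt0.
  by rewrite ler_wpM2r // divr_ge0 ?ltW ?mulr_gt0.
rewrite ler_wpM2r ?sqr_ge0 // (bigD1 k) //= lerDl.
apply: sumr_ge0 => l _; have pl_gt0 := one_sub_r_gt0 l.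
have [rl_gt0 _] := andP (r_01 l); have Glj_gt0 := G_gt0 l j.
by rewrite divr_ge0 ?mulr_ge0 ?ltW.
Qed.

End DistanceEstimate.

Local Open Scope complex_scope.
Import Normc.

Section ComplexFacts.
Variable R : rcfType.
Implicit Types (x w : R[i]) (c : R).

Lemma normc_sqr x : normc x ^+ 2 = complex.Re x ^+ 2 + complex.Im x ^+ 2.
Proof. by case: x => a b /=; rewrite sqr_sqrtr // addr_ge0 ?sqr_ge0. Qed.

Lemma norm_complexE x : `|x| = (normc x)%:C.
Proof. by case: x => a b; rewrite normc_def. Qed.

Lemma normc_ge0 x : 0 <= normc x.
Proof. by case: x => a b; exact: sqrtr_ge0. Qed.

Lemma normc_gt0_Im x : 0 < complex.Im x -> 0 < normc x.
Proof.
move=> Im_gt0.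
have nx2_gt0 : 0 < normc x ^+ 2 by rewrite normc_sqr ltr_wpDl ?sqr_ge0 ?exprn_gt0.
rewrite lt0r normc_ge0 andbT; apply: contraTneq nx2_gt0 => ->.
by rewrite expr0n ltxx.
Qed.

Lemma normc_real c : normc c%:C = `|c|.
Proof. by rewrite /= expr0n addr0 sqrtr_sqr. Qed.

Lemma normc_sum (I : finType) (F : I -> R[i]) : normc (\sum_i F i) <= \sum_i normc (F i).
Proof. exact: (@ler_norm_sum _ (Rcomplex R)). Qed.

Lemma Im_sum (I : finType) (F : I -> R[i]) : complex.Im (\sum_i F i) = \sum_i complex.Im (F i).
Proof. by apply: (big_morph (@complex.Im R)) => // -[a b] [c d]. Qed.

Lemma Im_realM c x : complex.Im (c%:C * x) = c * complex.Im x.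
Proof. by case: x => a b /=; rewrite mul0r addr0. Qed.

Lemma Im_eq_mul1 x w : x * w = 1 -> complex.Im x = - (normc x ^+ 2 * complex.Im w).
Proof.
rewrite normc_sqr; case: x w => a b [c d] [Re1 Im0] /=.
transitivity (b * (a * c - b * d) - a * (a * d + b * c)); first by rewrite Re1 Im0; ring.
by ring.
Qed.

End ComplexFacts.

Section QVEPerturbation.
Variables (R : realType) (K : nat) (G : 'M[R]_K) (r : 'I_K -> R) (t : R).
Variable g : 'I_K -> R[i].
Hypotheses (G_gt0 : forall k l, 0 < G k l) (r_01 : forall k, 0 < r k < 1).
Hypothesis r_fix : forall k, r k * (1 + \sum_l G k l * (1 - r l)) = 1.
Hypotheses (t_gt0 : 0 < t) (Im_g_gt0 : forall k, 0 < complex.Im (g k)).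
Hypothesis g_qve :
  forall k, 1 = (1 - t*i) * g k - g k * \sum_l (G k l)%:C * (g l - 1).

Let w k := (1 - t*i) - \sum_l (G k l)%:C * (g l - 1).

Let g_mul_w k : g k * w k = 1.
Proof. by rewrite [RHS](g_qve k) /w; ring. Qed.

Lemma Im_qve k :
  complex.Im (g k) = normc (g k) ^+ 2 * (t + \sum_l G k l * complex.Im (g l)).
Proof.
rewrite (Im_eq_mul1 (g_mul_w k)) -mulrN; congr (_ * _).
rewrite /w; set s := \sum_l _; have -> : complex.Im (1 - t*i - s) = - t - complex.Im s.
  by case: s => a b /=; rewrite sub0r.
rewrite /s Im_sum opprD !opprK; congr (_ + _); apply: eq_bigr => l _.
by rewrite Im_realM; case: (g l) => a b /=; rewrite subr0.
Qed.

(* At [z = 1] the real solution satisfies [r * w' = 1], hence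
   [g - r = g r (w' - w)] with [w' - w = i t + sum_l G_kl (g_l - r_l)]. *)
Lemma dist_qve k : normc (g k - (r k)%:C) <=
  normc (g k) * r k * (t + \sum_l G k l * normc (g l - (r l)%:C)).
Proof.
have [rk_gt0 _] := andP (r_01 k).
pose w' := (1 + \sum_l G k l * (1 - r l))%:C.
have r_mul_w' : (r k)%:C * w' = 1 by rewrite -rmorphM r_fix.
have -> : g k - (r k)%:C = g k * (r k)%:C * (w' - w k).
  by rewrite mulrBr -mulrA r_mul_w' mulrAC g_mul_w; ring.
have -> : w' - w k = t*i + \sum_l (G k l)%:C * (g l - (r l)%:C).
  have -> : \sum_l (G k l)%:C * (g l - (r l)%:C) =
      \sum_l (G k l * (1 - r l))%:C + \sum_l (G k l)%:C * (g l - 1).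
    by rewrite -big_split; apply: eq_bigr => l _; rewrite rmorphM rmorphB /=; ring.
  by rewrite /w' /w rmorphD rmorph_sum; ring.
rewrite !normcM normc_real (ger0_norm (ltW rk_gt0)); apply: ler_wpM2l.
  by rewrite mulr_ge0 ?normc_ge0 // ltW.
apply: le_trans (le_normcD _ _) _; apply: lerD.
  by rewrite /= expr0n add0r sqrtr_sqr (ger0_norm (ltW t_gt0)).
apply: le_trans (normc_sum _) _; apply: ler_sum => l _.
by rewrite normcM normc_real (ger0_norm (ltW (G_gt0 k l))).
Qed.

Lemma qve_dist_sqr_le j : normc (g j - (r j)%:C) ^+ 2 <=
  (\sum_k 4 * r k ^+ 2 * (1 - r j) / ((1 - r k) ^+ 3 * G k j)) * t ^+ 2.
Proof.
exact: (dist_sqr_le G_gt0 r_01 r_fix t_gt0 Im_g_gt0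
  (fun k => normc_gt0_Im (Im_g_gt0 k)) (fun k => normc_ge0 _) Im_qve dist_qve).
Qed.

End QVEPerturbation.

Lemma within_continuous_normcP (R : realType) (A : set (Cplx R)) (f : Cplx R -> Cplx R)
  (x : Cplx R) (e : R) : {within A, continuous f} -> A x -> 0 < e ->
  exists2 delta : R, 0 < delta &
    forall y, A y -> normc (x - y) < delta -> normc (f x - f y) < e.
Proof.
move=> f_cont Ax e_gt0.
have /cvgrPdist_lt/(_ e%:C) := (subspace_continuousP _ _).1 f_cont x Ax.
rewrite ltcR => /(_ e_gt0); rewrite near_withinE => /nbhs_normP [[delta delta_im]].
rewrite /= ltcE /= => /andP[/eqP -> delta_gt0] near_x.
exists delta => // y Ay xy_lt.
have : `|f x - f y| < e%:C by apply: near_x => //; rewrite /ball_ /= norm_complexE ltcR.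
by rewrite norm_complexE ltcR.
Qed.

Lemma continuous_within_vertical_limit (R : realType) (f : Cplx R -> Cplx R)
  (x c : Cplx R) (B : R) :
  {within [set z : Cplx R | complex.Im z <= 0], continuous f} -> complex.Im x <= 0 ->
  (forall t, 0 < t -> normc (f (x - t*i) - c) ^+ 2 <= B * t ^+ 2) -> f x = c.
Proof.
move=> f_cont Imx_le0 f_near.
apply/eqP; rewrite -subr_eq0; apply/negPn/negP => fx_neq_c.
pose e := normc (f x - c).
have e_gt0 : 0 < e.
  by rewrite lt0r normc_ge0 andbT; apply: contra fx_neq_c => /eqP/eq0_normc ->.
have [delta delta_gt0 near_x] :=
  within_continuous_normcP (e := e / 2) f_cont Imx_le0 ltac:(lra).
pose B' := `|B| + 1.
have B'_ge1 : 1 <= B' by rewrite lerDr.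
pose t := Num.min (delta / 2) (e / 2 / B').
have t_gt0 : 0 < t by rewrite lt_min !divr_gt0 //; lra.
have t_lt_delta : t < delta by rewrite gt_min; apply/orP; left; lra.
have tB'_le : t * B' <= e / 2 by rewrite -ler_pdivlMr ?ge_min ?lexx ?orbT //; lra.
have y_in : complex.Im (x - t*i) <= 0.
  by move: Imx_le0; case: (x) => a b /=; lra.
have near_fx : normc (f x - f (x - t*i)) < e / 2.
  apply: near_x; first exact: y_in.
  by rewrite opprB addrC subrK /= expr0n add0r sqrtr_sqr gtr0_norm.
have far_c : normc (f (x - t*i) - c) <= e / 2.
  have half_ge0 : 0 <= e / 2 by lra.
  rewrite -(@ler_pXn2r _ 2) ?nnegrE ?normc_ge0 //.
  apply: le_trans (f_near t t_gt0) _; apply: le_trans (_ : _ <= (t * B') ^+ 2) _.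
    have B_le : B <= B' * B' by rewrite /B'; have := ler_norm B; have := normr_ge0 B; nra.
    by rewrite exprMn mulrC ler_wpM2l ?sqr_ge0 // -expr2.
  by rewrite ler_pXn2r ?nnegrE // mulr_ge0 //; lra.
have := le_normcD (f x - f (x - t*i)) (f (x - t*i) - c).
by rewrite addrA subrK -/e; lra.
Qed.

Theorem mainTheorem10 (R : realType) (K : nat) (hK : (0 < K)%N)
  (rho : 'I_K -> R) (hrho : forall k, 0 < rho k < 1)
  (hrho1 : \sum_(k < K) rho k = 1)
  (S : 'M[R]_K) (hSsym : S^T = S) (hSpos : forall k l, 0 < S k l)
  (g : Cplx R -> 'I_K -> Cplx R) (hg : QVE_solution_ext rho S g) :
  1 < lambda1 (OmegaK rho S) ->
  forall k : 'I_K, 0 < g 1 k < 1.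
Proof.
move=> lambda1_gt1 k.
have rho_gt0 l : 0 < rho l by case/andP: (hrho l).
have Gamma_gt0 l m : 0 < GammaK rho S l m by rewrite GammaK_entry mulr_gt0.
have [a a_gt1 [p p_gt0 ap_le]] := GammaK_subinvariant rho_gt0 hSsym hSpos lambda1_gt1.
have [r [r_01 r_fix]] :=
  qve_real_solution (fun l m => ltW (Gamma_gt0 l m)) k a_gt1 p_gt0 ap_le.
case: hg => g_Im_gt0 g_qve g_cont.
suff -> : g 1 k = (r k)%:C by rewrite !ltcR.
apply: (continuous_within_vertical_limit (g_cont k)) => [|t t_gt0]; first by [].
have z_in : Hminus (1 - t*i) by rewrite /Hminus /= sub0r oppr_lt0.
apply: (qve_dist_sqr_le (G := GammaK rho S)) => //.
- exact: g_Im_gt0 _ z_in.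
- exact: g_qve _ z_in.
Qed.
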